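(* Let $(X_1,Y_1),\dots,(X_n,Y_n)$ be calibration data and $X_{n+1},\dots,X_{n+m}$ test covariates (with unobserved $Y_{n+j}$), $Y_i\in\mathbb{R}$, $s:\mathcal{X}\to[0,1]$ a score, $c\in\mathbb{R}$ a constant, and suppose the risk is binary: $\mathcal{L}(f,x,y)=\mathbf{1}\{y\le c\}$, $L_i=\mathbf{1}\{Y_i\le c\}$. Fix $\alpha\in(0,1)$ and take $\gamma=\alpha$ in the SCoRE e-values. Then for every $j\in\{1,\dots,m\}$, deterministically $E_{\alpha,n+j}(1)\ge e_{n+j}$; furthermore, $e_{n+j}=0$ implies $E_{\alpha,n+j}=0$.
   Context: Let $\mathcal{M}=\{s(X_i)\}_{i=1}^{n+m}$. For $t\in\mathbb{R}$, $\ell\in[0,1]$: $\mathrm{FR}_{n+j}(t;\ell)=\frac{\ell\mathbf{1}\{s(X_{n+j})\le t\}+\sum_{i=1}^nL_i\mathbf{1}\{s(X_i)\le t\}}{1+\sum_{k\ne j}\mathbf{1}\{s(X_{n+k})\le t\}}\cdot\frac{m}{n+1}$, $t_{\gamma,n+j}(\ell)=\max\{t\in\mathcal{M}:\mathrm{FR}_{n+j}(t;\ell)\le\gamma\}$ ($\max\emptyset=-\infty$), $$E_{\gamma,n+j}(\ell)=\frac{(n+1)\mathbf{1}\{s(X_{n+j})\le t_{\gamma,n+j}(\ell)\}}{\ell\mathbf{1}\{s(X_{n+j})\le t_{\gamma,n+j}(\ell)\}+\sum_{i=1}^nL_i\mathbf{1}\{s(X_i)\le t_{\gamma,n+j}(\ell)\}}$$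 (ratio $0$ if numerator $0$), and $E_{\gamma,n+j}=\inf_{\ell\in[0,1]}E_{\gamma,n+j}(\ell)$ (set to $0$ if $\inf_\ell t_{\gamma,n+j}(\ell)=-\infty$). Conformal p-values: with $V(x,y)=\infty\cdot\mathbf{1}\{y>c\}+s(x)$ (where $\infty\cdot0=0$), $p_j=\frac{1+\sum_{i=1}^n\mathbf{1}\{V(X_i,Y_i)\le V(X_{n+j},c)\}}{n+1}$. Let $\mathcal{S}^{\mathrm{CS}}$ be the output of the Benjamini–Hochberg procedure at level $\alpha$ applied to $p_1,\dots,p_m$ (i.e. with $k^*=\max\{k:p_{(k)}\le\alpha k/m\}$, or $0$ if none, $\mathcal{S}^{\mathrm{CS}}=\{j:p_j\le\alpha k^*/m\}$), and $e_{n+j}=\frac{\mathbf{1}\{p_j\le\alpha|\mathcal{S}^{\mathrm{CS}}|/m\}}{\alpha|\mathcal{S}^{\mathrm{CS}}|/m}$ (taken as $0$ when the indicator is $0$). *)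

From HB Require Import structures.
From mathcomp Require Import all_boot all_order all_algebra.
From mathcomp Require Import all_classical all_reals ereal.
Set Implicit Arguments. Unset Strict Implicit. Unset Printing Implicit Defensive.
Import Order.TTheory GRing.Theory Num.Theory.
Local Open Scope ring_scope.
Local Open Scope classical_set_scope.

(* Setting: calibration data (Xcal i, Ycal i), i < n; test covariates
   Xtest k, k < m; score s : X -> R; constant c; binary risk
   L_i = 1{Ycal i <= c}. Test index j : 'I_m corresponds to n+j. *)

Section SCoRE.
Variables (R : realType) (X : Type) (n m : nat) (s : X -> R)
  (Xcal : 'I_n -> X) (Ycal : 'I_n -> R) (Xtest : 'I_m -> X) (c : R).

Definition ind (b : bool) : R := if b then 1 else 0.

Definition Lrisk (i : 'I_n) : R := ind (Ycal i <= c).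

Definition scores : seq R :=
  [seq s (Xcal i) | i <- enum 'I_n] ++ [seq s (Xtest k) | k <- enum 'I_m].

Definition FR (j : 'I_m) (t l : R) : R :=
  (l * ind (s (Xtest j) <= t) + \sum_(i < n) Lrisk i * ind (s (Xcal i) <= t))
  / (1 + \sum_(k < m | k != j) ind (s (Xtest k) <= t))
  * (m%:R / n.+1%:R).

Definition tthr (gamma : R) (j : 'I_m) (l : R) : \bar R :=
  \big[maxe/-oo%E]_(u <- scores | FR j u l <= gamma) (u%:E).

Definition Eell (gamma : R) (j : 'I_m) (l : R) : \bar R :=
  let t := tthr gamma j l in
  let num : R := n.+1%:R * ind ((s (Xtest j))%:E <= t)%E in
  let den : R := l * ind ((s (Xtest j))%:E <= t)%E
                 + \sum_(i < n) Lrisk i * ind ((s (Xcal i))%:E <= t)%E in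
  if num == 0 then 0%E
  else if den == 0 then +oo%E
  else (num / den)%:E.

Definition Einf (gamma : R) (j : 'I_m) : \bar R :=
  if ereal_inf [set tthr gamma j l | l in [set l : R | 0 <= l <= 1]] == -oo%E
  then 0%E
  else ereal_inf [set Eell gamma j l | l in [set l : R | 0 <= l <= 1]].

(* nonconformity score V(x,y) = oo * 1{y > c} + s(x) *)
Definition Vscore (x : X) (y : R) : \bar R :=
  if c < y then +oo%E else (s x)%:E.

Definition pval (k : 'I_m) : R :=
  (1 + \sum_(i < n) ind (Vscore (Xcal i) (Ycal i) <= Vscore (Xtest k) c)%E)
  / n.+1%:R.

Definition pord (k : nat) : R :=
  nth 0 (sort <=%R [seq pval k | k <- enum 'I_m]) k.-1.

Definition kstar (alpha : R) : nat :=
  \max_(k < m.+1 | (0 < k)%N && (pord k <= alpha * k%:R / m%:R)) k.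

Definition SCS (alpha : R) : {set 'I_m} :=
  [set k : 'I_m | pval k <= alpha * (kstar alpha)%:R / m%:R].

Definition evalue (alpha : R) (k : 'I_m) : R :=
  let thr := alpha * #|SCS alpha|%:R / m%:R in
  if pval k <= thr then 1 / thr else 0.

End SCoRE.

(* With the binary risk, the conformal p-value of a test point with score u is
   q(u) = (1 + #{i : Y_i <= c, s(X_i) <= u}) / (n+1), nondecreasing in u, and for
   t >= s(X_{n+j}) one has FR_{n+j}(t; 1) = q(t) m / r(t), where r(t) counts the
   test scores <= t.  So if t is feasible (FR <= alpha), all r(t) test points with
   score <= t have p-value <= alpha r(t) / m, and the self-consistency of
   Benjamini-Hochberg gives r(t) <= |S^CS|, hence q(t) <= alpha |S^CS| / m.
   If j is rejected, the largest score of a rejected point is feasible and at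
   least s(X_{n+j}), so E_{alpha,n+j}(1) = 1 / q(t) >= m / (alpha |S^CS|) = e_{n+j}.
   If j is not rejected, s(X_{n+j}) exceeds every feasible t, so
   E_{alpha,n+j}(1) = 0, and so is the infimum over l. *)

From mathcomp Require Import all_boot all_order all_algebra.
From mathcomp Require Import all_classical all_reals ereal.
From mathcomp Require Import ring.
Set Implicit Arguments. Unset Strict Implicit. Unset Printing Implicit Defensive.
Import Order.TTheory GRing.Theory Num.Theory.
Local Open Scope ring_scope.
Section BenjaminiHochberg.
Variables (R : realFieldType) (m : nat) (p : 'I_m -> R) (alpha : R).
Hypothesis alpha_ge0 : 0 <= alpha.

Definition order_stat (r : nat) : R :=
  nth 0 (sort <=%R [seq p k | k <- enum 'I_m]) r.-1.

Definition count_le (x : R) : nat := #|[set k | p k <= x]|.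

Definition bh_kstar : nat :=
  \max_(k < m.+1 | (0 < k)%N && (order_stat k <= alpha * k%:R / m%:R)) k.

Definition bh_rejections : {set 'I_m} :=
  [set k | p k <= alpha * bh_kstar%:R / m%:R].

Lemma count_le_max x : (count_le x <= m)%N.
Proof. by rewrite -[leqRHS]card_ord max_card. Qed.

Lemma le_count_le x y : x <= y -> (count_le x <= count_le y)%N.
Proof.
move=> le_xy; apply/subset_leq_card/fintype.subsetP => k.
by rewrite !inE => /le_trans; apply.
Qed.

Lemma order_stat_leE x r : (0 < r <= m)%N ->
  (order_stat r <= x) = (r <= count_le x)%N.
Proof.
case/andP => r_gt0 r_le_m.
have sorted_p : sorted <=%R (sort <=%R [seq p k | k <- enum 'I_m]).
  exact/sort_sorted/le_total.
have countE : count (<= x) (sort <=%R [seq p k | k <- enum 'I_m]) = count_le x.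
  by rewrite count_sort count_map -sum1_count big_enum_cond /= sum1dep_card.
apply/idP/idP => [le_x | le_r].
  rewrite leqNgt; apply/negP => lt_r; move: le_x; apply/negP; rewrite -ltNge.
  apply: nth_count_gt => //; rewrite countE size_sort size_map size_enum_ord.
  by rewrite -ltnS prednK // lt_r (leq_trans _ r_le_m) // ltn_predL.
by apply: nth_count_le => //; rewrite countE prednK.
Qed.

Lemma bh_kstar_ge r : (0 < r <= m)%N -> order_stat r <= alpha * r%:R / m%:R ->
  (r <= bh_kstar)%N.
Proof.
case/andP => r_gt0 r_le_m le_r.
by apply: (@leq_bigmax_cond _ _ _ (Ordinal (r_le_m : (r < m.+1)%N))); rewrite /= r_gt0.
Qed.

Lemma bh_kstar_spec : bh_kstar = 0%N \/
  (0 < bh_kstar <= m)%N /\ order_stat bh_kstar <= alpha * bh_kstar%:R / m%:R.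
Proof.
rewrite /bh_kstar; elim/big_ind: _ => [|a b|k /andP[k_gt0 le_k]]; [by left| |].
  by rewrite /maxn; case: ifP.
by right; rewrite k_gt0 -ltnS ltn_ord.
Qed.

Lemma card_bh_rejections : #|bh_rejections| = bh_kstar.
Proof.
have le_kstar : (bh_kstar <= #|bh_rejections|)%N.
  case: bh_kstar_spec => [-> // | [kstar_range le_kstar]].
  by rewrite -(order_stat_leE _ kstar_range).
apply/eqP; rewrite eqn_leq le_kstar andbT.
have [-> // | card_gt0] := posnP #|bh_rejections|.
apply: bh_kstar_ge; first by rewrite card_gt0 count_le_max.
rewrite order_stat_leE ?card_gt0 ?count_le_max //; apply: le_count_le.
by rewrite ler_wpM2r ?invr_ge0 // ler_wpM2l // ler_nat.
Qed.

Lemma bh_rejectionsE :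
  bh_rejections = [set k | p k <= alpha * #|bh_rejections|%:R / m%:R].
Proof. by rewrite card_bh_rejections. Qed.

Lemma bh_rejections_max r : (0 < r)%N ->
  (r <= count_le (alpha * r%:R / m%:R))%N -> (r <= #|bh_rejections|)%N.
Proof.
move=> r_gt0 le_r; have r_le_m := leq_trans le_r (count_le_max _).
rewrite card_bh_rejections; apply: bh_kstar_ge; first by rewrite r_gt0.
by rewrite order_stat_leE // r_gt0.
Qed.

End BenjaminiHochberg.

Lemma ind_ge0 (R : realType) (b : bool) : 0 <= ind R b.
Proof. by case: b. Qed.

Lemma sum_ind_card (R : realType) (T : finType) (P : pred T) :
  \sum_k ind R (P k) = #|[set k | P k]|%:R.
Proof.
rewrite -sum1dep_card natr_sum (big_mkcond P) /=.
by apply: eq_bigr => k _; case: (P k).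
Qed.

Section SCoRE.
Variables (R : realType) (X : Type) (n m : nat) (s : X -> R)
  (Xcal : 'I_n -> X) (Ycal : 'I_n -> R) (Xtest : 'I_m -> X) (c : R).

Local Notation pval := (pval s Xcal Ycal Xtest c).
Local Notation FR := (FR s Xcal Ycal Xtest c).
Local Notation tthr := (tthr s Xcal Ycal Xtest c).
Local Notation Eell := (Eell s Xcal Ycal Xtest c).
Local Notation SCS := (SCS s Xcal Ycal Xtest c).
Local Notation evalue := (evalue s Xcal Ycal Xtest c).
Local Notation Einf := (Einf s Xcal Ycal Xtest c).
Local Notation test_score k := (s (Xtest k)).

Definition cal_risk (u : R) : R :=
  \sum_(i < n) Lrisk Ycal c i * ind R (s (Xcal i) <= u).

Definition pval_at (u : R) : R := (1 + cal_risk u) / n.+1%:R.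

Lemma cal_risk_ge0 u : 0 <= cal_risk u.
Proof. by apply: sumr_ge0 => i _; rewrite mulr_ge0 ?ind_ge0. Qed.

Lemma le_cal_risk u v : u <= v -> cal_risk u <= cal_risk v.
Proof.
move=> le_uv; apply: ler_sum => i _; rewrite ler_wpM2l ?ind_ge0 //.
rewrite /ind; have [le_iu|_] := boolP (s (Xcal i) <= u); last by case: ifP.
by rewrite (le_trans le_iu le_uv).
Qed.

Lemma pval_at_gt0 u : 0 < pval_at u.
Proof. by rewrite divr_gt0 // ltr_pwDl ?cal_risk_ge0. Qed.

Lemma le_pval_at u v : u <= v -> pval_at u <= pval_at v.
Proof. by move=> le_uv; rewrite ler_pM2r ?invr_gt0 // lerD2l le_cal_risk. Qed.

Lemma pvalE k : pval k = pval_at (test_score k).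
Proof.
rewrite /pval /pval_at /cal_risk /Vscore ltxx; congr ((1 + _) / _).
apply: eq_bigr => i _; rewrite /Lrisk /ind.
by case: ltP => _; rewrite ?leye_eq ?lee_fin ?mul0r ?mul1r.
Qed.

Lemma FR1E j u : test_score j <= u ->
  FR j u 1 = pval_at u * m%:R / (count_le (fun k => test_score k) u)%:R.
Proof.
move=> le_j; rewrite /FR /pval_at /count_le -sum_ind_card [in RHS](bigD1 j) //=.
rewrite /ind le_j mul1r -/(cal_risk u); ring.
Qed.

Lemma SCS_bh_rejections (alpha : R) : SCS alpha = bh_rejections pval alpha.
Proof. by []. Qed.

Lemma pval_at_le_rejection_level (alpha : R) j u : 0 <= alpha ->
  test_score j <= u -> FR j u 1 <= alpha ->
  pval_at u <= alpha * #|SCS alpha|%:R / m%:R.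
Proof.
move=> alpha_ge0 le_j le_FR.
set r := count_le (fun k => test_score k) u.
have r_gt0 : (0 < r)%N by apply/card_gt0P; exists j; rewrite inE.
have m_gt0 : (0 < m)%N by apply: leq_ltn_trans (ltn_ord j).
have le_level : pval_at u <= alpha * r%:R / m%:R.
  have -> : pval_at u = FR j u 1 * r%:R / m%:R.
    by rewrite FR1E // -/r; field; rewrite !pnatr_eq0 -!lt0n r_gt0 m_gt0.
  by rewrite ler_wpM2r ?invr_ge0 // ler_wpM2r.
apply: (le_trans le_level); rewrite ler_wpM2r ?invr_ge0 // ler_wpM2l //.
rewrite ler_nat SCS_bh_rejections bh_rejections_max //.
apply/subset_leq_card/fintype.subsetP => k; rewrite !inE pvalE => le_k.
exact: le_trans (le_pval_at le_k) le_level.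
Qed.

Lemma rejected_feasible_threshold (alpha : R) j : 0 <= alpha ->
  pval j <= alpha * #|SCS alpha|%:R / m%:R ->
  exists2 u, u \in scores s Xcal Xtest & test_score j <= u /\ FR j u 1 <= alpha.
Proof.
move=> alpha_ge0 le_pj.
have m_gt0 : (0 < m)%N by apply: leq_ltn_trans (ltn_ord j).
have rejectedE k : (k \in SCS alpha) = (pval k <= alpha * #|SCS alpha|%:R / m%:R).
  by rewrite SCS_bh_rejections {1}bh_rejectionsE // inE.
have j_rejected : j \in SCS alpha by rewrite rejectedE.
have [k0 k0_rejected max_k0] := arg_maxP (fun k => test_score k) j_rejected.
exists (test_score k0); first by rewrite mem_cat map_f ?orbT ?mem_enum.
have le_j : test_score j <= test_score k0 by exact: max_k0.
split=> //.
have le_card : (#|SCS alpha| <= count_le (fun k => test_score k) (test_score k0))%N.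
  by apply/subset_leq_card/fintype.subsetP => k /max_k0; rewrite inE.
have card_gt0 : (0 < #|SCS alpha|)%N by apply/card_gt0P; exists k0.
rewrite FR1E // -pvalE ler_pdivrMr ?ltr0n ?(leq_trans card_gt0) //.
apply: (@le_trans _ _ (alpha * #|SCS alpha|%:R)); last by rewrite ler_wpM2l ?ler_nat.
by rewrite -ler_pdivlMr ?ltr0n // -rejectedE.
Qed.

Lemma le_tthr (gamma : R) j l u : u \in scores s Xcal Xtest -> FR j u l <= gamma ->
  (u%:E <= tthr gamma j l)%E.
Proof. by move=> u_score le_FR; apply: le_bigmax_seq. Qed.

Lemma le_tthr_attained (gamma : R) j l x : (x%:E <= tthr gamma j l)%E ->
  exists2 u, tthr gamma j l = u%:E & x <= u /\ FR j u l <= gamma.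
Proof.
rewrite /tthr; elim/big_ind: _ => [|a b IHa IHb|u le_FR]; first by rewrite leeNy_eq.
- by rewrite /Order.max; case: ifP.
- by rewrite lee_fin => le_xu; exists u.
Qed.

Lemma Eell_ge0 (gamma : R) j l : 0 <= l -> (0 <= Eell gamma j l)%E.
Proof.
move=> l_ge0; rewrite /Eell; case: ifP => // _; case: ifP => // _.
have sum_ge0 (t : \bar R) :
  0 <= \sum_(i < n) Lrisk Ycal c i * ind R ((s (Xcal i))%:E <= t)%E.
  by apply: sumr_ge0 => i _; rewrite mulr_ge0 ?ind_ge0.
by rewrite lee_fin divr_ge0 ?addr_ge0 ?mulr_ge0 ?ind_ge0.
Qed.

Lemma Eell_eq0 (gamma : R) j l : ~~ ((test_score j)%:E <= tthr gamma j l)%E ->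
  Eell gamma j l = 0%E.
Proof. by rewrite /Eell => /negbTE ->; rewrite /ind mulr0 eqxx. Qed.

Lemma EellE (gamma : R) j l u : 0 < l -> tthr gamma j l = u%:E -> test_score j <= u ->
  Eell gamma j l = (n.+1%:R / (l + cal_risk u))%:E.
Proof.
move=> l_gt0 tthrE le_ju; rewrite /Eell tthrE lee_fin le_ju /ind !mulr1 pnatr_eq0 /=.
under eq_bigr => i _ do rewrite lee_fin.
have den_gt0 : 0 < l + cal_risk u by rewrite ltr_pwDl ?cal_risk_ge0.
by rewrite -/(cal_risk u) gt_eqF.
Qed.

Lemma Einf_eq0 (gamma : R) j : Eell gamma j 1 = 0%E -> Einf gamma j = 0%E.
Proof.
move=> E1_eq0; rewrite /Einf; case: ifP => // _.
apply/eqP; rewrite eq_le; apply/andP; split.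
  by apply: ereal_inf_lbound; exists 1; rewrite /= ?ler01 ?lexx.
by apply: le_ereal_inf_tmp => _ [l /andP[l_ge0 _] <-]; exact: Eell_ge0.
Qed.

Lemma evalue_le_Eell1 (alpha : R) j : 0 <= alpha ->
  ((evalue alpha j)%:E <= Eell alpha j 1)%E.
Proof.
move=> alpha_ge0; rewrite /evalue; case: ifP => [le_pj | _]; last exact: Eell_ge0.
have [u0 u0_score [le_j le_FR0]] := rejected_feasible_threshold alpha_ge0 le_pj.
have [u tthrE [le_u0 le_FR]] := le_tthr_attained (le_tthr u0_score le_FR0).
have le_ju := le_trans le_j le_u0.
have le_level := pval_at_le_rejection_level alpha_ge0 le_ju le_FR.
have thr_gt0 := lt_le_trans (pval_at_gt0 u) le_level.
rewrite (EellE ltr01 tthrE le_ju) lee_fin div1r -[_ / (1 + _)]invf_div.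
by rewrite lef_pV2 ?posrE ?(pval_at_gt0 u).
Qed.

Lemma evalue_eq0 (alpha : R) j : evalue alpha j = 0 ->
  alpha * #|SCS alpha|%:R / m%:R < pval j.
Proof.
rewrite /evalue; case: leP => [le_pj /eqP | //].
(* [1 / 0 = 0], so the level must be shown nonzero: p-values are positive. *)
rewrite div1r invr_eq0 => /eqP thr0; move: le_pj.
by rewrite thr0 pvalE leNgt pval_at_gt0.
Qed.

Lemma Einf_eq0_of_evalue_eq0 (alpha : R) j : 0 <= alpha ->
  evalue alpha j = 0 -> Einf alpha j = 0%E.
Proof.
move=> alpha_ge0 /evalue_eq0 lt_pj; apply/Einf_eq0/Eell_eq0/negP => le_j.
have [u tthrE [le_ju le_FR]] := le_tthr_attained le_j.
move: lt_pj; rewrite ltNge pvalE (le_trans (le_pval_at le_ju)) //.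
exact: pval_at_le_rejection_level le_FR.
Qed.

End SCoRE.

Theorem proposition5p2 (R : realType) (X : Type) (n m : nat) (s : X -> R)
  (Xcal : 'I_n -> X) (Ycal : 'I_n -> R) (Xtest : 'I_m -> X) (c : R)
  (hs : forall x, 0 <= s x <= 1)
  (alpha : R) (halpha : 0 < alpha < 1) (j : 'I_m) :
  ((evalue s Xcal Ycal Xtest c alpha j)%:E
     <= Eell s Xcal Ycal Xtest c alpha j 1)%E /\
  (evalue s Xcal Ycal Xtest c alpha j = 0 ->
     Einf s Xcal Ycal Xtest c alpha j = 0%E).
Proof.
have alpha_ge0 : 0 <= alpha by case/andP: halpha => /ltW.
by split; [exact: evalue_le_Eell1 | exact: Einf_eq0_of_evalue_eq0].
Qed.
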